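(* A ring $R$ is strongly nil-clean if, and only if, $R$ is GWNC and $R$ is a UU ring.
   Context: All rings are associative with identity. For a ring $S$, $U(S)$, ${\rm Nil}(S)$, ${\rm Id}(S)$ denote units, nilpotents, idempotents. $S$ is GWNC if every $a\in S\setminus U(S)$ can be written as $a=q+e$ or $a=q-e$ with $q\in{\rm Nil}(S)$, $e\in{\rm Id}(S)$. $R$ is strongly nil-clean if every element is $e+b$ with $e$ idempotent, $b$ nilpotent and $eb=be$. $R$ is UU if $U(R)\subseteq 1+{\rm Nil}(R)$. *)

From mathcomp Require Import all_boot all_algebra.
Set Implicit Arguments. Unset Strict Implicit. Unset Printing Implicit Defensive.
Import GRing.Theory.
Local Open Scope ring_scope.

Definition is_unit (S : pzRingType) (a : S) : Prop :=
  exists b : S, a * b = 1 /\ b * a = 1.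
Definition is_nilpotent (S : pzRingType) (a : S) : Prop :=
  exists n : nat, a ^+ n = 0.
Definition is_idempotent (S : pzRingType) (e : S) : Prop := e * e = e.

Definition GWNC (S : pzRingType) : Prop :=
  forall a : S, ~ is_unit a ->
    exists q e : S, is_nilpotent q /\ is_idempotent e /\ (a = q + e \/ a = q - e).

Definition strongly_nil_clean (R : pzRingType) : Prop :=
  forall a : R, exists e b : R,
    is_idempotent e /\ is_nilpotent b /\ e * b = b * e /\ a = e + b.

Definition UU (R : pzRingType) : Prop :=
  forall u : R, is_unit u -> exists q : R, is_nilpotent q /\ u = 1 + q.

From mathcomp Require Import all_boot all_algebra.
From Stdlib Require Import Classical_Prop.
Set Implicit Arguments. Unset Strict Implicit. Unset Printing Implicit Defensive.
Import GRing.Theory.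
Local Open Scope ring_scope.

(* (->) If a unit u is e + b with e idempotent and b a nilpotent commuting
   with e, then e = u - b is an idempotent unit, so e = 1 and u = 1 + b.
   (<-) In a UU ring the set J of all x such that Rx is nil is an ideal, it
   contains 2, and it contains eR(1 - e) for every idempotent e, hence every
   commutator qe - eq.  By GWNC (or UU, for units) any a is q + e or q - e, and
   then a - a^2 is q(1 - q) plus an element of J, hence nilpotent.  Finally,
   when a - a^2 is nilpotent, a lifts to an idempotent e commuting with a and
   with a - e nilpotent. *)

Section Nilpotents.

Variable R : pzRingType.
Implicit Types x y z u v e : R.

Lemma nilpotentMl_comm x y : GRing.comm x y -> is_nilpotent x -> is_nilpotent (x * y).
Proof. by move=> cxy [n xn0]; exists n; rewrite exprMn_comm // xn0 mul0r. Qed.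

Lemma nilpotentMr_comm x y : GRing.comm x y -> is_nilpotent y -> is_nilpotent (x * y).
Proof. by move=> cxy [n yn0]; exists n; rewrite exprMn_comm // yn0 mulr0. Qed.

Lemma nilpotentN x : is_nilpotent x -> is_nilpotent (- x).
Proof. by case=> n xn0; exists n; rewrite exprNn xn0 mulr0. Qed.

Lemma nilpotent_of_expr x n : is_nilpotent (x ^+ n) -> is_nilpotent x.
Proof. by case=> m xnm0; exists (n * m)%N; rewrite exprM. Qed.

Lemma nilpotent_mulC x y : is_nilpotent (x * y) -> is_nilpotent (y * x).
Proof.
have exprS_swap n : (y * x) ^+ n.+1 = y * (x * y) ^+ n * x.
  elim: n => [|n IHn]; first by rewrite expr1 expr0 mulr1.
  by rewrite exprS IHn [in RHS]exprS !mulrA.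
by case=> n xyn0; exists n.+1; rewrite exprS_swap xyn0 mulr0 mul0r.
Qed.

Lemma nilpotent_of_sqr_mul x y : x * x = y * x -> is_nilpotent y -> is_nilpotent x.
Proof.
move=> xx [n yn0]; exists n.+1.
suff -> : forall k, x ^+ k.+1 = y ^+ k * x by rewrite yn0 mul0r.
elim=> [|k IHk]; first by rewrite expr1 expr0 mul1r.
by rewrite exprSr IHk -mulrA xx mulrA -exprSr.
Qed.

Lemma subr1X x n : 1 - x ^+ n = (1 - x) * \sum_(i < n) x ^+ i.
Proof. by rewrite -[LHS]opprB -[1 - x]opprB mulNr subrX1. Qed.

Lemma subr_exprS x n : x - x ^+ n.+1 = (x - x * x) * \sum_(i < n) x ^+ i.
Proof. by rewrite -[x in x - _]mulr1 exprS -mulrBr subr1X mulrA mulrBr mulr1. Qed.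

Lemma unitM x y : is_unit x -> is_unit y -> is_unit (x * y).
Proof.
case=> x' [xx' x'x] [y' [yy' y'y]]; exists (y' * x'); split.
  by rewrite mulrA -(mulrA x) yy' mulr1.
by rewrite mulrA -(mulrA y') x'x mulr1.
Qed.

Lemma unitN1 : is_unit (-1 : R).
Proof. by exists (-1); rewrite mulrN1 opprK. Qed.

Lemma unit_1Bnil x : is_nilpotent x -> is_unit (1 - x).
Proof.
case=> n xn0; exists (\sum_(i < n) x ^+ i).
have c : GRing.comm (1 - x) (\sum_(i < n) x ^+ i).
  by apply: commr_sum => i _; apply/commrX/commr_sym/commrB => //; apply: commr1.
by rewrite -c -subr1X xn0 subr0.
Qed.

Lemma unit_1Dnil x : is_nilpotent x -> is_unit (1 + x).
Proof. by move=> /nilpotentN /unit_1Bnil; rewrite opprK. Qed.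

Lemma commr_inv u v z : u * v = 1 -> v * u = 1 -> GRing.comm u z -> GRing.comm v z.
Proof.
move=> uv vu uz.
by rewrite /GRing.comm -[v * z]mulr1 -uv mulrA -(mulrA v) -uz mulrA vu mul1r.
Qed.

Lemma unitB_nil_comm u y : is_unit u -> GRing.comm u y -> is_nilpotent y ->
  is_unit (u - y).
Proof.
move=> [v [uv vu]] uy ny.
have -> : u - y = u * (1 - v * y) by rewrite mulrBr mulr1 mulrA uv mul1r.
by apply/unitM/unit_1Bnil/nilpotentMr_comm => //; [exists v | apply: commr_inv uy].
Qed.

Lemma idempotent_unit_eq1 e : is_idempotent e -> is_unit e -> e = 1.
Proof. by move=> ee [v [ev _]]; rewrite -ev -{2}ee -mulrA ev mulr1. Qed.

Lemma idempotent1B e : is_idempotent e -> is_idempotent (1 - e).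
Proof. by rewrite /is_idempotent => ee; rewrite mulrBr mulr1 mulrBl mul1r ee subrr subr0. Qed.

End Nilpotents.

Section JRadical.

Variable R : pzRingType.
Implicit Types x s : R.

(* In a UU ring this is exactly the Jacobson radical. *)
Definition jradical x : Prop := forall s, is_nilpotent (s * x).

Lemma jradical_nilpotent x : jradical x -> is_nilpotent x.
Proof. by move=> /(_ 1); rewrite mul1r. Qed.

Lemma jradical0 : jradical (0 : R).
Proof. by move=> s; exists 1%N; rewrite mulr0 expr1. Qed.

Lemma jradicalMl s x : jradical x -> jradical (s * x).
Proof. by move=> jx s'; rewrite mulrA. Qed.

Lemma jradicalMr x s : jradical x -> jradical (x * s).
Proof. by move=> jx s'; rewrite mulrA; apply: nilpotent_mulC; rewrite mulrA. Qed.

Lemma jradicalN x : jradical x -> jradical (- x).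
Proof. by move=> jx s; rewrite mulrN -mulNr. Qed.

End JRadical.

Section UURing.

Variables (R : pzRingType) (uuR : UU R).
Implicit Types x y s u e q a b c : R.

Lemma UU_nilpotent_subr1 u : is_unit u -> is_nilpotent (u - 1).
Proof. by move=> /uuR [q [nq ->]]; rewrite [1 + q]addrC addrK. Qed.

Lemma UU_nilpotent2 : is_nilpotent (2 : R).
Proof. by have /UU_nilpotent_subr1/nilpotentN := unitN1 R; rewrite opprB opprK. Qed.

Lemma jradicalD x y : jradical x -> jradical y -> jradical (x + y).
Proof.
move=> jx jy s; have [v [sxv vsx]] := unit_1Bnil (jx s).
have : is_unit ((1 - s * x) * (1 - v * s * y)).
  by apply: unitM; [exists v | apply: unit_1Bnil].
rewrite mulrBr mulr1 !mulrA sxv mul1r -addrA -opprD -mulrDr => /UU_nilpotent_subr1.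
by rewrite addrAC subrr add0r => /nilpotentN; rewrite opprK.
Qed.

Lemma jradicalB x y : jradical x -> jradical y -> jradical (x - y).
Proof. by move=> jx /jradicalN; apply: jradicalD. Qed.

Lemma jradicalMn2 x : jradical (x *+ 2).
Proof.
move=> s; rewrite mulrnAr -mulr_natr.
by apply: nilpotentMr_comm; [apply: commr_nat | apply: UU_nilpotent2].
Qed.

Lemma nilpotentD_jradical x y : is_nilpotent x -> jradical y -> is_nilpotent (x + y).
Proof.
move=> [n xn0] jy.
have jexpr m : jradical ((x + y) ^+ m - x ^+ m).
  elim: m => [|m IHm]; first by rewrite !expr0 subrr; apply: jradical0.
  have -> : (x + y) ^+ m.+1 - x ^+ m.+1 = ((x + y) ^+ m - x ^+ m) * (x + y) + x ^+ m * y.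
    by rewrite !exprSr mulrBl [x ^+ m * (x + y)]mulrDr opprD addrA subrK.
  by apply: jradicalD; [apply: jradicalMr | apply: jradicalMl].
by have := jexpr n; rewrite xn0 subr0 => /jradical_nilpotent; apply: nilpotent_of_expr.
Qed.

Lemma UU_nilpotent_corner_mul e b c :
  e * b = b -> b * e = 0 -> c * e = c -> e * c = 0 -> is_nilpotent (b * c).
Proof.
move=> eb be ce ec.
have bb : b * b = 0 by rewrite -{2}eb mulrA be mul0r.
have cc : c * c = 0 by rewrite -{1}ce -mulrA ec mulr0.
set w := b + c + b * c; set z := b * c + c * b.
have nw : is_nilpotent w.
  have /UU_nilpotent_subr1 : is_unit ((1 + b) * (1 + c)).
    by apply: unitM; apply: unit_1Dnil; exists 2%N.
  by rewrite mulrDl !mulrDr !mul1r mulr1 addrAC [1 + c]addrC addrK addrA [c + b]addrC.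
have ww : w * w = z * (1 + w).
  have xbb X : X * b * b = 0 by rewrite -mulrA bb mulr0.
  have xcc X : X * c * c = 0 by rewrite -mulrA cc mulr0.
  rewrite !mulrDr !mulrDl !mulr1 !mulrA !xbb !xcc bb cc !mul0r !addr0 !add0r.
  by rewrite [b * c + c * b]addrC -!addrA; congr (_ + _); apply: addrCA.
(* [z = w^2 (1 + w)^-1] is a function of the nilpotent [w]. *)
have nz : is_nilpotent z.
  have [v [wv vw]] := unit_1Dnil nw.
  have -> : z = w * w * v by rewrite ww -mulrA wv mulr1.
  apply: nilpotentMl_comm; last exact: nilpotentMl_comm nw.
  apply/commr_sym/(commr_inv wv vw).
  by apply/commr_sym/commrD; [apply: commr1 | apply/commr_sym/commrM].
apply: nilpotent_of_sqr_mul nz.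
by rewrite /z mulrDl [c * b * _]mulrA -[c * b * b]mulrA bb mulr0 mul0r addr0.
Qed.

Lemma jradical_corner e x : is_idempotent e -> jradical (e * x * (1 - e)).
Proof.
move=> ee s; apply: nilpotent_mulC.
have ff := idempotent1B ee; set f := 1 - e in ff *.
have ef : e * f = 0 by rewrite mulrBr mulr1 ee subrr.
have fe : f * e = 0 by rewrite mulrBl mul1r ee subrr.
have xee X : X * e * e = X * e by rewrite -mulrA ee.
have xff X : X * f * f = X * f by rewrite -mulrA ff.
apply: (@nilpotent_of_sqr_mul _ _ (e * x * f * (f * s * e))).
  by rewrite !mulrA xff xee.
apply: (UU_nilpotent_corner_mul (e := e)).
- by rewrite !mulrA ee.
- by rewrite -mulrA fe mulr0.
- by rewrite xee.
- by rewrite !mulrA ef !mul0r.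
Qed.

Lemma jradical_commutator e q : is_idempotent e -> jradical (q * e - e * q).
Proof.
move=> ee; have -> : q * e - e * q = (1 - e) * q * (1 - (1 - e)) - e * q * (1 - e).
  by rewrite subKr mulrBr mulr1 !mulrBl !mul1r opprB subrKA.
by apply: jradicalB => //; apply: jradical_corner => //; apply: idempotent1B.
Qed.

Lemma UU_nilpotent_sub_sqr_nil_idem a q e : is_nilpotent q -> is_idempotent e ->
  a = q + e \/ a = q - e -> is_nilpotent (a - a * a).
Proof.
move=> nq ee.
have nil_add_idem q' : is_nilpotent q' -> is_nilpotent ((q' + e) - (q' + e) * (q' + e)).
  move=> nq'; have -> : (q' + e) - (q' + e) * (q' + e) =
      q' * (1 - q') - ((q' * e - e * q') + (e * q') *+ 2).
    rewrite mulr2n addrA subrK mulrBr mulr1 mulrDl !mulrDr ee.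
    by rewrite addrA opprD addrACA subrr addr0 -addrA opprD addrA.
  apply: nilpotentD_jradical => //.
    by apply: nilpotentMl_comm nq'; apply/commrB => //; apply: commr1.
  by apply/jradicalN/jradicalD; [apply: jradical_commutator | apply: jradicalMn2].
case=> ->; first exact: nil_add_idem.
(* [-(q - e)] is again of the form nilpotent plus idempotent. *)
have := nil_add_idem _ (nilpotentN nq); have -> : - q + e = - (q - e) by rewrite opprB addrC.
set x := q - e; rewrite mulrNN => /nilpotentN /nilpotentD_jradical.
move=> /(_ _ (jradicalMn2 (- (x * x)))).
by rewrite opprB opprK mulr2n addrC addrA subrK addrC.
Qed.

Lemma GWNC_UU_nil_idem (gR : GWNC R) a :
  exists q e, is_nilpotent q /\ is_idempotent e /\ (a = q + e \/ a = q - e).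
Proof.
case: (classic (is_unit a)) => [/uuR [q [nq ->]] | /gR //].
by exists q, 1; split => //; split; [rewrite /is_idempotent mulr1 | left; rewrite addrC].
Qed.

Lemma GWNC_UU_nilpotent_sub_sqr (gR : GWNC R) a : is_nilpotent (a - a * a).
Proof.
have [q [e [nq [ee aE]]]] := GWNC_UU_nil_idem gR a.
exact: UU_nilpotent_sub_sqr_nil_idem aE.
Qed.

End UURing.

(* The classical lift: [e = a^(n+1) (a^(n+1) + (1 - a)^(n+1))^-1]. *)
Lemma idempotent_lift (R : pzRingType) (a : R) : is_nilpotent (a - a * a) ->
  exists2 e : R, is_idempotent e & GRing.comm a e /\ is_nilpotent (a - e).
Proof.
set t := a - a * a => -[n tn0].
have t_comm z : GRing.comm a z -> GRing.comm t z.
  by move=> az; apply/commr_sym/commrB => //; apply: commrM.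
have nt z : GRing.comm a z -> is_nilpotent (t * z).
  by move=> /t_comm tz; apply: nilpotentMl_comm tz _; exists n.
have a1a : GRing.comm a (1 - a) by apply: commrB => //; apply: commr1.
have t1a : (1 - a) - (1 - a) * (1 - a) = t.
  by rewrite -{1}[1 - a]mulr1 -mulrBr subKr mulrBl mul1r.
set x := a ^+ n.+1; set y := (1 - a) ^+ n.+1.
have ax : GRing.comm a x by apply: commrX.
have xy0 : x * y = 0 by rewrite -exprMn_comm // mulrBr mulr1 exprSr tn0 mul0r.
have [v [uv vu]] : is_unit (x + y).
  have -> : x + y = 1 - t * (\sum_(i < n) a ^+ i + \sum_(i < n) (1 - a) ^+ i).
    rewrite mulrDr -subr_exprS -t1a -subr_exprS -/x -/y.
    by rewrite addrACA [a + _]addrC subrK opprD addrA subrr add0r opprD !opprK.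
  apply: unit_1Bnil; apply: nt; apply: commrD; apply: commr_sum => i _; exact: commrX.
have av : GRing.comm a v.
  apply/commr_sym/(commr_inv uv vu)/commr_sym/commrD => //; exact: commrX.
have vx : GRing.comm v x by apply/commrX/commr_sym.
exists (x * v).
  rewrite /is_idempotent mulrA -(mulrA x) vx mulrA.
  by rewrite -[x * x]addr0 -xy0 -mulrDr -!mulrA (mulrA _ v) uv mul1r.
split; first exact: commrM.
have -> : a - x * v = t * (((1 - a) ^+ n - a ^+ n) * v).
  have -> : a - x * v = (a * (x + y) - x) * v by rewrite mulrBl -mulrA uv mulr1.
  rewrite mulrA; congr (_ * v).
  rewrite mulrDr /x /y !exprS !mulrA [a * (1 - a)]mulrBr mulr1 -/t.
  by rewrite mulrBr [t * a ^+ n]mulrBl opprB [_ + t * _]addrC -addrA.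
apply: nt; apply/commrM => //; apply/commrB; exact: commrX.
Qed.

Section StronglyNilClean.

Variable R : pzRingType.

Lemma strongly_nil_clean_GWNC : strongly_nil_clean R -> GWNC R.
Proof.
move=> snc a _; have [e [b [ee [nb [_ ->]]]]] := snc a.
by exists b, e; split => //; split => //; left; rewrite addrC.
Qed.

Lemma strongly_nil_clean_UU : strongly_nil_clean R -> UU R.
Proof.
move=> snc u uu; have [e [b [ee [nb [eb uE]]]]] := snc u.
exists b; split => //; rewrite uE; congr (_ + b).
apply: idempotent_unit_eq1 => //; have -> : e = u - b by rewrite uE addrK.
by apply: unitB_nil_comm => //; rewrite uE; apply/commr_sym/commrD.
Qed.

Lemma strongly_nil_clean_of_nilpotent_sub_sqr :
  (forall a : R, is_nilpotent (a - a * a)) -> strongly_nil_clean R.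
Proof.
move=> nil_sub_sqr a; have [e ee [ae nae]] := idempotent_lift (nil_sub_sqr a).
exists e, (a - e); split=> //; split=> //; split; last by rewrite addrC subrK.
exact/commrB/commr_sym.
Qed.

End StronglyNilClean.

Theorem lemma2p30 (R : pzRingType) :
  strongly_nil_clean R <-> (GWNC R /\ UU R).
Proof.
split=> [snc | [gR uuR]].
  by split; [apply: strongly_nil_clean_GWNC | apply: strongly_nil_clean_UU].
apply: strongly_nil_clean_of_nilpotent_sub_sqr => a.
exact: GWNC_UU_nilpotent_sub_sqr.
Qed.
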